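(* Let $I=[x_1,x_N]$ with partition $x_1<\dots<x_N$ and affine maps $u_i(x)=a_ix+b_i$ with $u_i(x_1)=x_i$, $u_i(x_N)=x_{i+1}$ ($i\in\mathbb{N}_{N-1}$). Let $f,g\in C(I)$ with $f\ge g$ on $I$ and let $\{q_n\}$ be a sequence in $(0,1]$ with $\lim q_n=1$. Set $\phi(f-g,i)=\min_{x\in I}(f-g)(u_i(x))$, $\Phi_n(f)=\max_{x\in I}M_{n,q_n}f(x)$, $\phi(g)=\min_{x\in I}g(x)$. Suppose the continuous scaling functions satisfy (1) $\|\alpha\|_\infty<1$ and (2) for all $n\in\mathbb{N}$, $i\in\mathbb{N}_{N-1}$, $x\in I$: \[ 0\le\alpha_i(x)\le\min\left\{\frac{\phi(f-g,i)}{\Phi_n(f)-\phi(g)},1\right\}. \] Then the quantum MKZ-fractal functions satisfy $f^{(q_n,\alpha)}_n\ge g$ on $I$ for every $n\in\mathbb{N}$, and $f^{(q_n,\alpha)}_n\to f$ uniformly on $I$.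
   Context: For $q\in(0,1]$: $[k]_q=\frac{1-q^k}{1-q}$ ($q\ne1$), $[k]_1=k$, $q$-factorials, $\binom{n}{k}_q=\frac{[n]_q!}{[k]_q![n-k]_q!}$. Quantum MKZ operator: $M_{n,q}h(x)=P_{n,q}(x)\sum_{k\ge0}\binom{n+k}{k}_q\left(\frac{x-x_1}{x_N-x_1}\right)^k h\!\left(x_1+(x_N-x_1)\frac{[k]_q}{[k+n]_q}\right)$ for $x_1\le x<x_N$, $M_{n,q}h(x_N)=h(x_N)$, $P_{n,q}(x)=\prod_{j=0}^n(x_N-x_1-q^j(x-x_1))/(x_N-x_1)^{n+1}$. $\|\alpha\|_\infty=\max_i\|\alpha_i\|_\infty$. The quantum MKZ-fractal function $h^{(q,\alpha)}_n$ of $h\in C(I)$ is the unique $G\in C(I)$ with $G(u_i(x))=h(u_i(x))+\alpha_i(x)(G(x)-M_{n,q}h(x))$ for all $x\in I$, $i\in\mathbb{N}_{N-1}$. *)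

From Stdlib Require Import Reals Lra.
From Coquelicot Require Import Coquelicot.
Open Scope R_scope.

Definition qint (q : R) (k : nat) : R :=
  if Req_EM_T q 1 then INR k else (1 - q ^ k) / (1 - q).

Fixpoint qfact (q : R) (k : nat) : R :=
  match k with
  | O => 1
  | S k' => qfact q k' * qint q (S k')
  end.

Definition qbinom (q : R) (n k : nat) : R :=
  qfact q n / (qfact q k * qfact q (n - k)).

Fixpoint prodR (F : nat -> R) (m : nat) : R :=
  match m with
  | O => F O
  | S m' => prodR F m' * F (S m')
  end.

Definition Pnq (x1 xN : R) (n : nat) (q : R) (x : R) : R :=
  prodR (fun j => xN - x1 - q ^ j * (x - x1)) n / (xN - x1) ^ (S n).

(* Quantum MKZ operator M_{n,q} on I = [x1, xN].
   Outside I the value is irrelevant; we set it to h x. *)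
Definition MKZ (x1 xN : R) (n : nat) (q : R) (h : R -> R) (x : R) : R :=
  if Rle_dec x1 x then
    if Rlt_dec x xN then
      Pnq x1 xN n q x *
      Series (fun k => qbinom q (n + k) k * ((x - x1) / (xN - x1)) ^ k *
                       h (x1 + (xN - x1) * (qint q k / qint q (k + n))))
    else h x
  else h x.

Definition inI (x1 xN y : R) : Prop := x1 <= y <= xN.

Definition contI (x1 xN : R) (h : R -> R) : Prop :=
  forall y, inI x1 xN y ->
    filterlim h (within (inI x1 xN) (locally y)) (locally (h y)).

(* min / max over I (attained for continuous functions on the compact I) *)
Definition minI (x1 xN : R) (h : R -> R) : R :=
  real (Glb_Rbar (fun v => exists y, inI x1 xN y /\ v = h y)).
Definition maxI (x1 xN : R) (h : R -> R) : R :=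
  real (Lub_Rbar (fun v => exists y, inI x1 xN y /\ v = h y)).

(* The MKZ weights c_k t^k, c_k = [n+k choose k]_q, sum to 1 / P_{n,q} (a q-analogue of
   the negative binomial series), and under them the nodes [k]_q / [k+n]_q have mean t and
   variance at most t / [n+1]_q.  Since [n+1]_{q_n} -> oo when q_n -> 1, a Korovkin estimate
   gives M_{n,q_n} f -> f uniformly on I.
   For the fractal function G, evaluating the self-referential equation at a minimiser
   z = u_i(y) of G and using alpha_i(y) (Phi_n(f) - phi(g)) <= phi(f - g, i) gives
   (1 - alpha_i(y)) (G z - phi(g)) >= 0; hence G >= phi(g), and then G >= g on every u_i(I).
   Evaluating it at a maximiser of |G - f| gives
   ||G - f|| <= ||alpha|| (||G - f|| + ||f - M f||), i.e.
   ||G - f|| <= ||alpha|| / (1 - ||alpha||) ||f - M f|| -> 0. *)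

From Stdlib Require Import Reals Lra Lia.
From Coquelicot Require Import Coquelicot.
Open Scope R_scope.

Lemma qint_0 q : qint q 0 = 0.
Proof. unfold qint; destruct (Req_EM_T q 1); simpl; [reflexivity | field; lra]. Qed.

Lemma qint_1 q : qint q 1 = 1.
Proof. unfold qint; destruct (Req_EM_T q 1); simpl; [reflexivity | field; lra]. Qed.

Lemma qint_add q k m : qint q (k + m) = qint q k + q ^ k * qint q m.
Proof.
  unfold qint; destruct (Req_EM_T q 1) as [->|Hq].
  - rewrite plus_INR, pow1; ring.
  - rewrite pow_add; field; lra.
Qed.

Lemma qint_S q m : qint q (S m) = qint q m + q ^ m.
Proof. rewrite <- Nat.add_1_r, qint_add, qint_1; ring. Qed.

Lemma qint_S_mul q m : qint q (S m) = 1 + q * qint q m.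
Proof. change (S m) with (1 + m)%nat; rewrite qint_add, qint_1; simpl; ring. Qed.

Lemma qint_ge_0 q m : 0 <= q -> 0 <= qint q m.
Proof.
  intros Hq; induction m as [|m IH]; [rewrite qint_0; lra|].
  rewrite qint_S; pose proof (pow_le q m Hq); lra.
Qed.

Lemma qint_ge_1 q m : 0 <= q -> 1 <= qint q (S m).
Proof. intros Hq; rewrite qint_S_mul; pose proof (qint_ge_0 q m Hq); nra. Qed.

Lemma qint_le q m p : 0 <= q -> (m <= p)%nat -> qint q m <= qint q p.
Proof.
  intros Hq Hmp; induction Hmp as [|p _ IH]; [lra|].
  rewrite qint_S; pose proof (pow_le q p Hq); lra.
Qed.

Lemma pow_ge_1_sub_mul q j : 0 <= q -> 1 - INR j * (1 - q) <= q ^ j.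
Proof.
  intros Hq; induction j as [|j IH]; [simpl; lra|].
  rewrite S_INR; simpl.
  assert (0 <= INR j * ((1 - q) * (1 - q)))
    by (apply Rmult_le_pos; [apply pos_INR | apply Rle_0_sqr]).
  assert (q * (1 - INR j * (1 - q)) <= q * q ^ j) by (apply Rmult_le_compat_l; lra).
  replace (1 - (INR j + 1) * (1 - q))
    with (q * (1 - INR j * (1 - q)) - INR j * ((1 - q) * (1 - q))) by ring.
  lra.
Qed.

Lemma qint_ge_quadratic q m : 0 <= q <= 1 -> INR m - INR m ^ 2 * (1 - q) <= qint q m.
Proof.
  intros Hq; induction m as [|m IH]; [rewrite qint_0; simpl; lra|].
  rewrite qint_S, S_INR.
  pose proof (pow_ge_1_sub_mul q m (proj1 Hq)); pose proof (pos_INR m); nra.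
Qed.

Lemma qint_diag_unbounded (q : nat -> R) :
  (forall n, (1 <= n)%nat -> 0 <= q n <= 1) -> is_lim_seq q 1 ->
  is_lim_seq (fun n => qint (q n) (S n)) p_infty.
Proof.
  intros Hq Hlim; apply is_lim_seq_spec; intros M.
  destruct (INR_archimed 1 (Rabs M + 1) ltac:(lra)) as [m Hm]; rewrite Rmult_1_r in Hm.
  assert (Hm0 : 0 < INR m ^ 2) by (pose proof (Rabs_pos M); apply pow_lt; lra).
  apply is_lim_seq_spec in Hlim.
  destruct (Hlim (mkposreal _ (Rinv_0_lt_compat _ Hm0))) as [n1 Hn1]; simpl in Hn1.
  exists (Nat.max 1 (Nat.max n1 m)); intros n Hn.
  specialize (Hn1 n ltac:(lia)); specialize (Hq n ltac:(lia)).
  rewrite Rabs_left1 in Hn1 by lra.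
  assert (Hsmall : INR m ^ 2 * (1 - q n) < 1).
  { apply (Rmult_lt_compat_l (INR m ^ 2)) in Hn1; [|lra].
    rewrite Rinv_r in Hn1 by lra; lra. }
  pose proof (qint_ge_quadratic (q n) m Hq).
  pose proof (qint_le (q n) m (S n) (proj1 Hq) ltac:(lia)).
  pose proof (Rle_abs M); lra.
Qed.

Lemma qfact_pos q k : 0 <= q -> 0 < qfact q k.
Proof.
  intros Hq; induction k as [|k IH]; simpl; [lra|].
  pose proof (qint_ge_1 q k Hq); nra.
Qed.

Definition mkz_coef (q : R) (n k : nat) : R := qbinom q (n + k) k.

Definition mkz_node (q : R) (n k : nat) : R := qint q k / qint q (k + n).

Lemma mkz_coef_eq q n k : mkz_coef q n k = qfact q (n + k) / (qfact q k * qfact q n).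
Proof. unfold mkz_coef, qbinom; replace (n + k - k)%nat with n by lia; reflexivity. Qed.

Lemma mkz_coef_pos q n k : 0 <= q -> 0 < mkz_coef q n k.
Proof.
  intros Hq; rewrite mkz_coef_eq.
  pose proof (qfact_pos q (n + k) Hq); pose proof (qfact_pos q k Hq); pose proof (qfact_pos q n Hq).
  apply Rdiv_lt_0_compat; [|apply Rmult_lt_0_compat]; assumption.
Qed.

Lemma mkz_coef_0_l q k : 0 <= q -> mkz_coef q 0 k = 1.
Proof. intros Hq; rewrite mkz_coef_eq; simpl; pose proof (qfact_pos q k Hq); field; lra. Qed.

Lemma mkz_coef_0_r q n : 0 <= q -> mkz_coef q n 0 = 1.
Proof.
  intros Hq; rewrite mkz_coef_eq, Nat.add_0_r; simpl.
  pose proof (qfact_pos q n Hq); field; lra.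
Qed.

Lemma mkz_coef_pascal q n k : 0 <= q ->
  mkz_coef q (S n) (S k) = mkz_coef q (S n) k + q ^ S k * mkz_coef q n (S k).
Proof.
  intros Hq; rewrite !mkz_coef_eq.
  replace (S n + S k)%nat with (S (S (n + k))) by lia.
  replace (S n + k)%nat with (S (n + k)) by lia.
  replace (n + S k)%nat with (S (n + k)) by lia.
  assert (Hsplit : qint q (S (S (n + k))) = qint q (S k) + q ^ S k * qint q (S n)).
  { rewrite <- qint_add; f_equal; lia. }
  simpl qfact; rewrite Hsplit.
  pose proof (qfact_pos q (n + k) Hq); pose proof (qfact_pos q k Hq); pose proof (qfact_pos q n Hq).
  pose proof (qint_ge_1 q k Hq); pose proof (qint_ge_1 q n Hq); pose proof (qint_ge_1 q (n + k) Hq).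
  field; repeat split; lra.
Qed.

Lemma mkz_coef_S_node q n k : 0 <= q ->
  mkz_coef q n (S k) * mkz_node q n (S k) = mkz_coef q n k.
Proof.
  intros Hq; unfold mkz_node; rewrite !mkz_coef_eq.
  replace (n + S k)%nat with (S (n + k)) by lia; replace (S k + n)%nat with (S (n + k)) by lia.
  simpl qfact.
  pose proof (qfact_pos q (n + k) Hq); pose proof (qfact_pos q k Hq); pose proof (qfact_pos q n Hq).
  pose proof (qint_ge_1 q k Hq); pose proof (qint_ge_1 q (n + k) Hq).
  field; repeat split; lra.
Qed.

Lemma mkz_node_0 q n : mkz_node q n 0 = 0.
Proof. unfold mkz_node; rewrite qint_0; unfold Rdiv; ring. Qed.

Lemma mkz_node_bounds q n k : 0 <= q -> 0 <= mkz_node q n k <= 1.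
Proof.
  intros Hq; unfold mkz_node.
  pose proof (qint_ge_0 q k Hq); pose proof (qint_le q k (k + n) Hq ltac:(lia)).
  destruct (Req_dec (qint q (k + n)) 0) as [->|Hne].
  - unfold Rdiv; rewrite Rinv_0; lra.
  - assert (0 < qint q (k + n)) by (pose proof (qint_ge_0 q (k + n) Hq); lra).
    split; [apply Rdiv_le_0_compat; lra|].
    apply Rcomplements.Rle_div_l; lra.
Qed.

Lemma mkz_node_S_le q n k : 0 <= q <= 1 ->
  mkz_node q n (S k) <= / qint q (S n) + mkz_node q n k.
Proof.
  intros Hq; unfold mkz_node; rewrite qint_S_mul.
  set (D := qint q (S k + n)).
  assert (HD : qint q (S n) <= D) by (apply qint_le; [lra | lia]).
  pose proof (qint_ge_1 q n (proj1 Hq)).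
  pose proof (qint_ge_0 q k (proj1 Hq)) as Hk.
  assert (Hfirst : 1 / D <= / qint q (S n)).
  { unfold Rdiv; rewrite Rmult_1_l; apply Rinv_le_contravar; lra. }
  assert (Hsecond : q * qint q k / D <= qint q k / qint q (k + n)).
  { destruct (Nat.eq_dec (k + n) 0) as [Hz|Hz].
    - replace k with 0%nat by lia; rewrite qint_0, Rmult_0_r; unfold Rdiv; lra.
    - assert (Hkn : 1 <= qint q (k + n)).
      { replace (k + n)%nat with (S (k + n - 1)) by lia; apply qint_ge_1; lra. }
      assert (qint q (k + n) <= D) by (apply qint_le; [lra | lia]).
      apply Rle_trans with (qint q k / D).
      + unfold Rdiv; apply Rmult_le_compat_r; [left; apply Rinv_0_lt_compat; lra | nra].
      + unfold Rdiv; apply Rmult_le_compat_l; [lra | apply Rinv_le_contravar; lra]. }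
  replace ((1 + q * qint q k) / D) with (1 / D + q * qint q k / D) by (field; lra).
  lra.
Qed.

Lemma prodR_ext F G m : (forall j, F j = G j) -> prodR F m = prodR G m.
Proof. intros H; induction m as [|m IH]; simpl; rewrite ?IH, ?H; reflexivity. Qed.

Lemma prodR_S_l F m : prodR F (S m) = F O * prodR (fun j => F (S j)) m.
Proof.
  induction m as [|m IH]; [simpl; ring|].
  change (prodR F (S (S m))) with (prodR F (S m) * F (S (S m))).
  rewrite IH; simpl; ring.
Qed.

Definition qpoch (q t : R) (n : nat) : R := prodR (fun j => 1 - q ^ j * t) n.

Lemma qpoch_S q t n : qpoch q t (S n) = (1 - t) * qpoch q (q * t) n.
Proof.
  unfold qpoch; rewrite prodR_S_l; simpl.
  f_equal; [ring | apply prodR_ext; intros j; simpl; ring].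
Qed.

Lemma qpoch_pos q t n : 0 <= q <= 1 -> 0 <= t < 1 -> 0 < qpoch q t n.
Proof.
  intros Hq Ht.
  assert (Hfactor : forall j, 0 < 1 - q ^ j * t).
  { intros j; pose proof (pow_le q j (proj1 Hq)).
    pose proof (pow_incr q 1 j Hq) as Hle; rewrite pow1 in Hle; nra. }
  unfold qpoch; induction n as [|n IH];
    [exact (Hfactor O) | exact (Rmult_lt_0_compat _ _ IH (Hfactor (S n)))].
Qed.

Lemma prodR_affine_factor L s q m :
  prodR (fun j => L - q ^ j * (s * L)) m = L ^ S m * prodR (fun j => 1 - q ^ j * s) m.
Proof. induction m as [|m IH]; simpl; [|rewrite IH; simpl]; ring. Qed.

Lemma Pnq_eq_qpoch x1 xN n q y : x1 < xN ->
  Pnq x1 xN n q y = qpoch q ((y - x1) / (xN - x1)) n.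
Proof.
  intros Hx; unfold Pnq, qpoch.
  rewrite (prodR_ext _ (fun j => xN - x1 - q ^ j * ((y - x1) / (xN - x1) * (xN - x1))))
    by (intros j; field; lra).
  rewrite prodR_affine_factor; field; apply pow_nonzero; lra.
Qed.

Lemma sum_n_le_is_series (b : nat -> R) L K :
  (forall k, 0 <= b k) -> is_series b L -> sum_n b K <= L.
Proof.
  intros Hb HL.
  assert (Hmono : forall m, sum_n b K <= sum_n b (m + K)).
  { induction m as [|m IH]; [simpl; lra|].
    rewrite Nat.add_succ_l, sum_Sn; unfold plus; simpl; specialize (Hb (S (m + K))); lra. }
  apply (is_lim_seq_incr_n _ K L) in HL.
  exact (is_lim_seq_le _ _ (sum_n b K) L Hmono (is_lim_seq_const _) HL).
Qed.

Lemma is_series_geom_rec (a b : nat -> R) t L : 0 <= t < 1 ->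
  (forall k, 0 <= a k) -> (forall k, 0 <= b k) ->
  a O = b O -> (forall k, a (S k) = t * a k + b (S k)) ->
  is_series b L -> is_series a (L / (1 - t)).
Proof.
  intros Ht Ha Hb H0 HS HL.
  assert (Hrec : forall K, sum_n a (S K) = t * sum_n a K + sum_n b (S K)).
  { induction K as [|K IH].
    - rewrite !sum_Sn, !sum_O; unfold plus; simpl; rewrite HS, H0; ring.
    - rewrite (sum_Sn a (S K)), (sum_Sn b (S K)), HS, IH at 1.
      rewrite (sum_Sn a K).
      unfold plus; simpl; ring. }
  assert (Hincr : forall K, sum_n a K <= sum_n a (S K)).
  { intros K; rewrite sum_Sn; unfold plus; simpl; specialize (Ha (S K)); lra. }
  assert (Hbound : forall K, sum_n a K <= L / (1 - t)).
  { intros K; apply Rcomplements.Rle_div_r; [lra|].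
    pose proof (Hincr K) as HK; rewrite Hrec in HK.
    pose proof (sum_n_le_is_series b L (S K) Hb HL); nra. }
  destruct (ex_finite_lim_seq_incr _ _ Hincr Hbound) as [l Hl].
  assert (Hl_rec : is_lim_seq (fun K => sum_n a (S K)) (t * l + L)).
  { apply is_lim_seq_ext with (fun K => t * sum_n a K + sum_n b (S K)).
    - intros K; symmetry; apply Hrec.
    - apply is_lim_seq_plus'.
      + apply is_lim_seq_mult'; [apply is_lim_seq_const | exact Hl].
      + apply (is_lim_seq_incr_1 (sum_n b) L); exact HL. }
  pose proof (proj1 (is_lim_seq_incr_1 _ l) Hl) as Hl_shift.
  pose proof (is_lim_seq_unique _ _ Hl_shift) as E; rewrite (is_lim_seq_unique _ _ Hl_rec) in E.
  injection E as E.
  replace (L / (1 - t)) with l by (field_simplify_eq; lra).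
  exact Hl.
Qed.

Definition mkz_weight (q : R) (n : nat) (t : R) (k : nat) : R := mkz_coef q n k * t ^ k.

Lemma mkz_weight_ge_0 q n t k : 0 <= q -> 0 <= t -> 0 <= mkz_weight q n t k.
Proof.
  intros Hq Ht; unfold mkz_weight.
  pose proof (mkz_coef_pos q n k Hq); pose proof (pow_le t k Ht); nra.
Qed.

Lemma is_series_mkz_weight q n t : 0 <= q <= 1 -> 0 <= t < 1 ->
  is_series (mkz_weight q n t) (/ qpoch q t n).
Proof.
  intros Hq; revert t; induction n as [|n IH]; intros t Ht.
  - apply is_series_ext with (fun k => t ^ k).
    { intros k; unfold mkz_weight; rewrite mkz_coef_0_l by lra; lra. }
    unfold qpoch; simpl; replace (1 - 1 * t) with (1 - t) by ring.
    apply is_series_geom; rewrite Rabs_pos_eq; lra.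
  - assert (Hqt : 0 <= q * t < 1) by nra.
    pose proof (qpoch_pos q (q * t) n Hq Hqt).
    replace (/ qpoch q t (S n)) with (/ qpoch q (q * t) n / (1 - t))
      by (rewrite qpoch_S; field; lra).
    apply is_series_geom_rec with (mkz_weight q n (q * t)); try lra.
    + intros k; apply mkz_weight_ge_0; lra.
    + intros k; apply mkz_weight_ge_0; lra.
    + unfold mkz_weight; rewrite !mkz_coef_0_r by lra; ring.
    + intros k; unfold mkz_weight; rewrite mkz_coef_pascal, Rpow_mult_distr by lra; simpl; ring.
    + exact (IH (q * t) Hqt).
Qed.

Lemma series_abs_le (a b : nat -> R) L :
  (forall k, Rabs (a k) <= b k) -> is_series b L -> ex_series a /\ Rabs (Series a) <= L.
Proof.
  intros Hab HL.
  assert (Hb : ex_series b) by (exists L; exact HL).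
  assert (Habs : ex_series (fun k => Rabs (a k))).
  { apply (@ex_series_le _ R_CompleteNormedModule _ b); [|exact Hb].
    intros k; change (Rabs (Rabs (a k)) <= b k); rewrite Rabs_Rabsolu; apply Hab. }
  split.
  - apply (@ex_series_le _ R_CompleteNormedModule _ b); [apply Hab | exact Hb].
  - rewrite <- (is_series_unique b L HL).
    apply Rle_trans with (Series (fun k => Rabs (a k))); [apply Series_Rabs, Habs|].
    apply Series_le; [|exact Hb].
    intros k; split; [apply Rabs_pos | apply Hab].
Qed.

Lemma is_series_unshift (a : nat -> R) l :
  a O = 0 -> is_series (fun k => a (S k)) l -> is_series a l.
Proof.
  intros H0 Hl; apply is_series_decr_1.
  rewrite H0; unfold plus, opp; simpl; rewrite Ropp_0, Rplus_0_r; exact Hl.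
Qed.

Section MKZWeights.

Variables (q t : R) (n : nat).
Hypothesis Hq : 0 <= q <= 1.
Hypothesis Ht : 0 <= t < 1.

Local Notation w := (mkz_weight q n t).
Local Notation nu := (mkz_node q n).

Lemma mkz_weight_S_node k : w (S k) * nu (S k) = t * w k.
Proof.
  unfold mkz_weight; simpl pow.
  rewrite <- (mkz_coef_S_node q n k (proj1 Hq)); ring.
Qed.

Lemma mkz_weight_node_sq_le k :
  w (S k) * nu (S k) ^ 2 <= t * (w k / qint q (S n) + w k * nu k).
Proof.
  replace (w (S k) * nu (S k) ^ 2) with (t * (w k * nu (S k)))
    by (rewrite <- Rmult_assoc, <- mkz_weight_S_node; ring).
  replace (w k / qint q (S n) + w k * nu k) with (w k * (/ qint q (S n) + nu k))
    by (unfold Rdiv; ring).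
  apply Rmult_le_compat_l; [lra|].
  apply Rmult_le_compat_l; [apply mkz_weight_ge_0; lra | apply mkz_node_S_le, Hq].
Qed.

Lemma is_series_mkz_weight_node : is_series (fun k => w k * nu k) (t / qpoch q t n).
Proof.
  apply is_series_unshift; [rewrite mkz_node_0; ring|].
  apply is_series_ext with (fun k => t * w k); [intros k; symmetry; apply mkz_weight_S_node|].
  apply (is_series_scal_l t w (/ qpoch q t n)), is_series_mkz_weight; assumption.
Qed.

Lemma mkz_variance_le :
  ex_series (fun k => w k * (nu k - t) ^ 2) /\
  Series (fun k => w k * (nu k - t) ^ 2) <= t / (qpoch q t n * qint q (S n)).
Proof.
  set (D := qint q (S n)); set (Q := qpoch q t n).
  assert (HD : 1 <= D) by (apply qint_ge_1; lra).
  assert (HQ : 0 < Q) by (apply qpoch_pos; assumption).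
  set (U := fun k => match k with O => 0 | S j => t * (w j / D + w j * nu j) end).
  assert (HU : is_series U (t * (/ Q / D + t / Q))).
  { apply is_series_unshift; [reflexivity|].
    apply (is_series_scal_l t (fun k => w k / D + w k * nu k)).
    apply (is_series_plus (fun k => w k / D) (fun k => w k * nu k)).
    - apply (is_series_scal_r (/ D) w (/ Q)), is_series_mkz_weight; assumption.
    - apply is_series_mkz_weight_node. }
  set (T := fun k => U k - 2 * t * (w k * nu k) + t ^ 2 * w k).
  assert (HT : is_series T (t / (Q * D))).
  { replace (t / (Q * D)) with (t * (/ Q / D + t / Q) - 2 * t * (t / Q) + t ^ 2 * / Q)
      by (field; lra).
    apply (is_series_plus (fun k => U k - 2 * t * (w k * nu k)) (fun k => t ^ 2 * w k)).
    - apply (is_series_minus U (fun k => 2 * t * (w k * nu k))); [exact HU|].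
      apply (is_series_scal_l (2 * t) (fun k => w k * nu k) (t / Q)), is_series_mkz_weight_node.
    - apply (is_series_scal_l (t ^ 2) w (/ Q)), is_series_mkz_weight; assumption. }
  destruct (series_abs_le (fun k => w k * (nu k - t) ^ 2) T (t / (Q * D))) as [Hex Hle];
    [|exact HT|].
  - intros k; assert (Hsq : w k * nu k ^ 2 <= U k).
    { destruct k as [|k]; [simpl U; rewrite mkz_node_0; lra | apply mkz_weight_node_sq_le]. }
    pose proof (mkz_weight_ge_0 q n t k (proj1 Hq) (proj1 Ht)).
    rewrite Rabs_pos_eq by (apply Rmult_le_pos; [lra | apply pow2_ge_0]).
    unfold T; nra.
  - split; [exact Hex|]; eapply Rle_trans; [apply Rle_abs | exact Hle].
Qed.

Lemma mkz_weighted_mean_estimate (h : nat -> R) h0 e K : 0 <= K ->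
  (forall k, Rabs (h k - h0) <= e + K * (nu k - t) ^ 2) ->
  Rabs (qpoch q t n * Series (fun k => w k * h k) - h0) <= e + K * t / qint q (S n).
Proof.
  intros HK Hh.
  set (D := qint q (S n)); set (Q := qpoch q t n).
  assert (HD : 1 <= D) by (apply qint_ge_1; lra).
  assert (HQ : 0 < Q) by (apply qpoch_pos; assumption).
  assert (Hw : forall k, 0 <= w k) by (intros k; apply mkz_weight_ge_0; lra).
  destruct mkz_variance_le as [Hvar_ex Hvar].
  set (V := Series (fun k => w k * (nu k - t) ^ 2)) in Hvar; fold Q D in Hvar.
  destruct (series_abs_le (fun k => w k * (h k - h0))
              (fun k => e * w k + K * (w k * (nu k - t) ^ 2))
              (e * / Q + K * V)) as [Hex Habs].
  { intros k; rewrite Rabs_mult, Rabs_pos_eq by apply Hw.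
    specialize (Hh k); specialize (Hw k); nra. }
  { apply (is_series_plus (fun k => e * w k) (fun k => K * (w k * (nu k - t) ^ 2))).
    - apply (is_series_scal_l e w (/ Q)), is_series_mkz_weight; assumption.
    - apply (is_series_scal_l K (fun k => w k * (nu k - t) ^ 2) V), Series_correct, Hvar_ex. }
  assert (Hsum : Series (fun k => w k * h k) = Series (fun k => w k * (h k - h0)) + h0 * / Q).
  { apply is_series_unique.
    apply is_series_ext with (fun k => w k * (h k - h0) + h0 * w k); [intros k; simpl; ring|].
    apply (is_series_plus (fun k => w k * (h k - h0)) (fun k => h0 * w k));
      [apply Series_correct, Hex|].
    apply (is_series_scal_l h0 w (/ Q)), is_series_mkz_weight; assumption. }
  rewrite Hsum.
  replace (Q * (Series (fun k => w k * (h k - h0)) + h0 * / Q) - h0)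
    with (Q * Series (fun k => w k * (h k - h0))) by (field; lra).
  rewrite Rabs_mult, Rabs_pos_eq by lra.
  apply Rle_trans with (Q * (e * / Q + K * V)); [apply Rmult_le_compat_l; lra|].
  replace (Q * (e * / Q + K * V)) with (e + K * (Q * V)) by (field; lra).
  apply Rplus_le_compat_l.
  replace (K * t / D) with (K * (Q * (t / (Q * D)))) by (field; lra).
  apply Rmult_le_compat_l; [exact HK|]; apply Rmult_le_compat_l; lra.
Qed.

End MKZWeights.

Definition clamp (x1 xN y : R) : R := Rmax x1 (Rmin xN y).

Lemma clamp_in x1 xN y : x1 <= xN -> inI x1 xN (clamp x1 xN y).
Proof. intros H; unfold inI, clamp, Rmax, Rmin; repeat destruct Rle_dec; lra. Qed.

Lemma clamp_id x1 xN y : inI x1 xN y -> clamp x1 xN y = y.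
Proof. unfold inI, clamp, Rmax, Rmin; intros H; repeat destruct Rle_dec; lra. Qed.

Lemma clamp_dist_le x1 xN u v : x1 <= xN ->
  Rabs (clamp x1 xN u - clamp x1 xN v) <= Rabs (u - v).
Proof. intros H; unfold clamp, Rmax, Rmin; repeat destruct Rle_dec; split_Rabs; lra. Qed.

(* Continuity on [I] is continuity of the extension constant outside [I], which gives
   access to the extreme value and Heine theorems of the standard library. *)
Lemma contI_clamp x1 xN h : x1 <= xN -> contI x1 xN h ->
  forall y, continuity_pt (fun y => h (clamp x1 xN y)) y.
Proof.
  intros Hle Hc y; apply continuity_pt_filterlim; intros P HP.
  destruct (Hc _ (clamp_in x1 xN y Hle) P HP) as [eps He].
  exists eps; intros w Hw; apply He; [|apply clamp_in; exact Hle].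
  change (Rabs (clamp x1 xN w - clamp x1 xN y) < eps); change (Rabs (w - y) < eps) in Hw.
  pose proof (clamp_dist_le x1 xN w y Hle); lra.
Qed.

Lemma contI_bounded x1 xN h : x1 <= xN -> contI x1 xN h ->
  exists B, forall y, inI x1 xN y -> Rabs (h y) <= B.
Proof.
  intros Hle Hc.
  pose proof (fun c (_ : x1 <= c <= xN) => contI_clamp x1 xN h Hle Hc c) as Hc'.
  destruct (continuity_ab_maj _ x1 xN Hle Hc') as [M [HM _]].
  destruct (continuity_ab_min _ x1 xN Hle Hc') as [m [Hm _]].
  exists (Rmax (Rabs (h (clamp x1 xN M))) (Rabs (h (clamp x1 xN m)))).
  intros y Hy; specialize (HM y Hy); specialize (Hm y Hy); simpl in HM, Hm.
  rewrite (clamp_id x1 xN y Hy) in HM, Hm.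
  pose proof (Rmax_l (Rabs (h (clamp x1 xN M))) (Rabs (h (clamp x1 xN m)))) as HBM.
  pose proof (Rmax_r (Rabs (h (clamp x1 xN M))) (Rabs (h (clamp x1 xN m)))) as HBm.
  revert HM Hm HBM HBm; split_Rabs; lra.
Qed.

Lemma contI_argmin x1 xN h : x1 <= xN -> contI x1 xN h ->
  exists z, inI x1 xN z /\ forall y, inI x1 xN y -> h z <= h y.
Proof.
  intros Hle Hc.
  destruct (continuity_ab_min _ x1 xN Hle (fun c _ => contI_clamp x1 xN h Hle Hc c))
    as [m [Hm Hm_in]].
  exists m; split; [exact Hm_in|].
  intros y Hy; specialize (Hm y Hy); simpl in Hm; rewrite !clamp_id in Hm by assumption.
  exact Hm.
Qed.

Lemma contI_argmax_abs_sub x1 xN h1 h2 : x1 <= xN -> contI x1 xN h1 -> contI x1 xN h2 ->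
  exists z, inI x1 xN z /\ forall y, inI x1 xN y -> Rabs (h1 y - h2 y) <= Rabs (h1 z - h2 z).
Proof.
  intros Hle Hc1 Hc2.
  set (F := fun y => Rabs (h1 (clamp x1 xN y) - h2 (clamp x1 xN y))).
  assert (HF : forall c, continuity_pt F c).
  { intros c; apply (continuity_pt_comp (fun y => h1 (clamp x1 xN y) - h2 (clamp x1 xN y)) Rabs).
    - apply continuity_pt_minus; apply contI_clamp; assumption.
    - apply Rcontinuity_abs. }
  destruct (continuity_ab_maj F x1 xN Hle (fun c _ => HF c)) as [M [HM HM_in]].
  exists M; split; [exact HM_in|].
  intros y Hy; specialize (HM y Hy); unfold F in HM; rewrite !clamp_id in HM by assumption.
  exact HM.
Qed.

Lemma contI_unif x1 xN h : x1 <= xN -> contI x1 xN h ->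
  forall eps, 0 < eps -> exists delta, 0 < delta /\ forall u v, inI x1 xN u -> inI x1 xN v ->
    Rabs (u - v) < delta -> Rabs (h u - h v) < eps.
Proof.
  intros Hle Hc eps He.
  destruct (Heine (fun y => h (clamp x1 xN y)) (fun c => x1 <= c <= xN) (compact_P3 x1 xN)
              (fun c _ => contI_clamp x1 xN h Hle Hc c) (mkposreal eps He)) as [d Hd].
  exists d; split; [apply cond_pos|].
  intros u v Hu Hv Huv; specialize (Hd u v Hu Hv Huv); simpl in Hd.
  rewrite !clamp_id in Hd by assumption; exact Hd.
Qed.

Lemma minI_spec x1 xN h m y0 : (forall y, inI x1 xN y -> m <= h y) -> inI x1 xN y0 ->
  m <= minI x1 xN h /\ minI x1 xN h <= h y0.
Proof.
  intros Hm Hy0; unfold minI.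
  set (E := fun v => exists y, inI x1 xN y /\ v = h y).
  assert (HE : E (h y0)) by (exists y0; split; [exact Hy0 | reflexivity]).
  assert (Hlb : forall v, E v -> Rbar_le m v) by (intros v [y [Hy ->]]; exact (Hm y Hy)).
  destruct (Glb_Rbar_correct E) as [Hlow Hgreatest].
  specialize (Hlow _ HE); specialize (Hgreatest m Hlb).
  destruct (Glb_Rbar E); simpl in *; try contradiction; split; assumption.
Qed.

Lemma maxI_spec x1 xN h M y0 : (forall y, inI x1 xN y -> h y <= M) -> inI x1 xN y0 ->
  h y0 <= maxI x1 xN h.
Proof.
  intros HM Hy0; unfold maxI.
  set (E := fun v => exists y, inI x1 xN y /\ v = h y).
  assert (HE : E (h y0)) by (exists y0; split; [exact Hy0 | reflexivity]).
  assert (Hub : forall v, E v -> Rbar_le v M) by (intros v [y [Hy ->]]; exact (HM y Hy)).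
  destruct (Lub_Rbar_correct E) as [Hupp Hleast].
  specialize (Hupp _ HE); specialize (Hleast M Hub).
  destruct (Lub_Rbar E); simpl in *; try contradiction; assumption.
Qed.

Lemma contI_minI_le x1 xN h y : x1 <= xN -> contI x1 xN h -> inI x1 xN y ->
  minI x1 xN h <= h y.
Proof.
  intros Hle Hc Hy; destruct (contI_bounded x1 xN h Hle Hc) as [B HB].
  apply (minI_spec x1 xN h (- B) y); [|exact Hy].
  intros z Hz; specialize (HB z Hz); apply Rabs_le_between in HB; lra.
Qed.

Lemma mkz_node_point_in x1 xN q n k : x1 <= xN -> 0 <= q ->
  inI x1 xN (x1 + (xN - x1) * mkz_node q n k).
Proof. intros Hx Hq; pose proof (mkz_node_bounds q n k Hq); unfold inI; nra. Qed.

Lemma MKZ_eq_series x1 xN n q h y : x1 < xN -> x1 <= y < xN ->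
  MKZ x1 xN n q h y =
  qpoch q ((y - x1) / (xN - x1)) n *
  Series (fun k => mkz_weight q n ((y - x1) / (xN - x1)) k * h (x1 + (xN - x1) * mkz_node q n k)).
Proof.
  intros Hx Hy; unfold MKZ.
  destruct (Rle_dec x1 y); [|lra]; destruct (Rlt_dec y xN); [|lra].
  rewrite Pnq_eq_qpoch by exact Hx; reflexivity.
Qed.

Lemma MKZ_right_end x1 xN n q h : MKZ x1 xN n q h xN = h xN.
Proof. unfold MKZ; destruct (Rle_dec x1 xN); [destruct (Rlt_dec xN xN); [lra|]|]; reflexivity. Qed.

Lemma normalized_coord_bounds x1 xN y : x1 < xN -> x1 <= y < xN ->
  0 <= (y - x1) / (xN - x1) < 1.
Proof.
  intros Hx Hy; split; [apply Rdiv_le_0_compat; lra|].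
  apply (Rcomplements.Rdiv_lt_1 (y - x1) (xN - x1)); lra.
Qed.

Lemma MKZ_abs_le x1 xN n q h B : x1 < xN -> 0 <= q <= 1 ->
  (forall y, inI x1 xN y -> Rabs (h y) <= B) ->
  forall y, inI x1 xN y -> Rabs (MKZ x1 xN n q h y) <= B.
Proof.
  intros Hx Hq HB y Hy.
  destruct (Req_dec y xN) as [->|Hne]; [rewrite MKZ_right_end; apply HB, Hy|].
  unfold inI in Hy; rewrite MKZ_eq_series by lra.
  pose proof (mkz_weighted_mean_estimate q _ n Hq (normalized_coord_bounds x1 xN y Hx ltac:(lra))
    (fun k => h (x1 + (xN - x1) * mkz_node q n k)) 0 B 0 (Rle_refl 0)) as Hest.
  rewrite Rminus_0_r in Hest; unfold Rdiv in Hest; rewrite !Rmult_0_l, Rplus_0_r in Hest.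
  apply Hest; intros k; rewrite Rminus_0_r, Rmult_0_l, Rplus_0_r.
  apply HB, mkz_node_point_in; lra.
Qed.

Lemma MKZ_le_maxI x1 xN n q h y : x1 < xN -> 0 <= q <= 1 -> contI x1 xN h -> inI x1 xN y ->
  MKZ x1 xN n q h y <= maxI x1 xN (MKZ x1 xN n q h).
Proof.
  intros Hx Hq Hc Hy; destruct (contI_bounded x1 xN h ltac:(lra) Hc) as [B HB].
  apply (maxI_spec x1 xN _ B y); [|exact Hy].
  intros z Hz; eapply Rle_trans; [apply Rle_abs | apply MKZ_abs_le; assumption].
Qed.

Lemma unif_cont_quadratic_bound x1 xN h e B delta : 0 < delta ->
  (forall y, inI x1 xN y -> Rabs (h y) <= B) ->
  (forall u v, inI x1 xN u -> inI x1 xN v -> Rabs (u - v) < delta -> Rabs (h u - h v) < e) ->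
  forall u v, inI x1 xN u -> inI x1 xN v ->
    Rabs (h u - h v) <= e + 2 * B / delta ^ 2 * (u - v) ^ 2.
Proof.
  intros Hd HB Hunif u v Hu Hv.
  assert (He : 0 < e).
  { specialize (Hunif u u Hu Hu); rewrite !Rminus_diag, Rabs_R0 in Hunif; apply Hunif; lra. }
  assert (HB0 : 0 <= B) by (pose proof (HB u Hu); pose proof (Rabs_pos (h u)); lra).
  assert (Hd2 : 0 < delta ^ 2) by (apply pow_lt; exact Hd).
  destruct (Rlt_dec (Rabs (u - v)) delta) as [Hclose|Hfar].
  - specialize (Hunif u v Hu Hv Hclose).
    assert (0 <= 2 * B / delta ^ 2 * (u - v) ^ 2).
    { apply Rmult_le_pos; [apply Rdiv_le_0_compat; lra | apply pow2_ge_0]. }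
    lra.
  - assert (Hsq : delta ^ 2 <= (u - v) ^ 2).
    { rewrite <- (pow2_abs (u - v)); apply pow_incr; lra. }
    assert (2 * B <= 2 * B / delta ^ 2 * (u - v) ^ 2).
    { apply (Rmult_le_reg_r (delta ^ 2)); [exact Hd2|].
      replace (2 * B / delta ^ 2 * (u - v) ^ 2 * delta ^ 2) with (2 * B * (u - v) ^ 2)
        by (field; lra).
      apply Rmult_le_compat_l; lra. }
    pose proof (HB u Hu); pose proof (HB v Hv).
    assert (Rabs (h u - h v) <= Rabs (h u) + Rabs (h v))
      by (unfold Rminus; rewrite <- (Rabs_Ropp (h v)); apply Rabs_triang).
    lra.
Qed.

Lemma MKZ_unif_conv x1 xN f (q : nat -> R) : x1 < xN -> contI x1 xN f ->
  (forall n, (1 <= n)%nat -> 0 <= q n <= 1) -> is_lim_seq q 1 ->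
  forall eps, 0 < eps -> exists n0, forall n y, (n0 <= n)%nat -> (1 <= n)%nat ->
    inI x1 xN y -> Rabs (MKZ x1 xN n (q n) f y - f y) <= eps.
Proof.
  intros Hx Hf Hq Hlim eps He.
  destruct (contI_bounded x1 xN f ltac:(lra) Hf) as [B HB].
  destruct (contI_unif x1 xN f ltac:(lra) Hf (eps / 2) ltac:(lra)) as [d [Hd Hunif]].
  set (L := xN - x1).
  set (K := 2 * B / d ^ 2 * L ^ 2).
  assert (HK : 0 <= K).
  { assert (0 <= B)
      by (pose proof (HB x1 ltac:(unfold inI; lra)); pose proof (Rabs_pos (f x1)); lra).
    unfold K; apply Rmult_le_pos; [|apply pow2_ge_0].
    apply Rdiv_le_0_compat; [lra | apply pow_lt; lra]. }
  pose proof (qint_diag_unbounded q Hq Hlim) as Hinf; apply is_lim_seq_spec in Hinf.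
  destruct (Hinf (2 * K / eps)) as [n0 Hn0].
  exists n0; intros n y Hn Hn1 Hy.
  destruct (Req_dec y xN) as [->|Hne]; [rewrite MKZ_right_end, Rminus_diag, Rabs_R0; lra|].
  specialize (Hq n Hn1); specialize (Hn0 n Hn).
  assert (Hy' : x1 <= y < xN) by (unfold inI in Hy; lra).
  rewrite MKZ_eq_series by assumption.
  pose proof (normalized_coord_bounds x1 xN y Hx Hy') as Ht.
  set (t := (y - x1) / (xN - x1)) in *.
  assert (HD : 1 <= qint (q n) (S n)) by (apply qint_ge_1; lra).
  eapply Rle_trans;
    [apply (mkz_weighted_mean_estimate (q n) t n Hq Ht
              (fun k => f (x1 + (xN - x1) * mkz_node (q n) n k)) (f y) (eps / 2) K HK)|].
  - intros k.
    replace (K * (mkz_node (q n) n k - t) ^ 2)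
      with (2 * B / d ^ 2 * (x1 + (xN - x1) * mkz_node (q n) n k - y) ^ 2)
      by (unfold K, t, L; field; lra).
    apply (unif_cont_quadratic_bound x1 xN f (eps / 2) B d Hd HB Hunif);
      [apply mkz_node_point_in; lra | exact Hy].
  - assert (K * t / qint (q n) (S n) <= eps / 2).
    { apply Rcomplements.Rle_div_l; [lra|].
      apply Rle_trans with K; [nra|].
      apply Rcomplements.Rlt_div_l in Hn0; lra. }
    lra.
Qed.

Lemma Rmult_le_of_le_Rmin_div a p D : 0 <= a -> 0 <= p -> a <= Rmin (p / D) 1 -> a * D <= p.
Proof.
  intros Ha Hp Hmin; pose proof (Rmin_l (p / D) 1).
  destruct (Rle_lt_dec D 0) as [HD|HD]; [nra|].
  apply Rcomplements.Rle_div_r; lra.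
Qed.

Section Partition.

Variables (N : nat) (x a b : nat -> R).
Hypothesis hN : (2 <= N)%nat.
Hypothesis hx : forall i, (1 <= i < N)%nat -> x i < x (S i).
Hypothesis hu1 : forall i, (1 <= i < N)%nat -> a i * x 1%nat + b i = x i.
Hypothesis hu2 : forall i, (1 <= i < N)%nat -> a i * x N + b i = x (S i).

Local Notation I := (inI (x 1%nat) (x N)).

Lemma partition_le i j : (1 <= i)%nat -> (i <= j)%nat -> (j <= N)%nat -> x i <= x j.
Proof.
  intros Hi Hij HjN; induction Hij as [|j Hij IH]; [lra|].
  apply Rle_trans with (x j); [apply IH; lia | left; apply hx; lia].
Qed.

Lemma partition_ends_lt : x 1%nat < x N.
Proof. apply Rlt_le_trans with (x 2%nat); [apply hx; lia | apply partition_le; lia]. Qed.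

Lemma affine_slope_pos i : (1 <= i < N)%nat -> 0 < a i.
Proof.
  intros Hi; pose proof (hu1 i Hi); pose proof (hu2 i Hi); pose proof (hx i Hi).
  pose proof partition_ends_lt.
  assert (a i * (x N - x 1%nat) > 0) by lra; nra.
Qed.

Lemma affine_maps_into i y : (1 <= i < N)%nat -> I y -> I (a i * y + b i).
Proof.
  intros Hi [Hy1 Hy2]; pose proof (hu1 i Hi); pose proof (hu2 i Hi).
  pose proof (affine_slope_pos i Hi).
  pose proof (partition_le 1 i ltac:(lia) ltac:(lia) ltac:(lia)).
  pose proof (partition_le (S i) N ltac:(lia) ltac:(lia) ltac:(lia)).
  split; nra.
Qed.

Lemma affine_cover z : I z -> exists i y, (1 <= i < N)%nat /\ I y /\ z = a i * y + b i.
Proof.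
  intros [Hz1 Hz2].
  assert (Hfind : forall m, (1 <= m < N)%nat -> z <= x (S m) ->
            exists i, (1 <= i <= m)%nat /\ x i <= z <= x (S i)).
  { induction m as [|m IH]; intros Hm Hzm; [lia|].
    destruct (Nat.eq_dec m 0) as [->|Hm0]; [exists 1%nat; split; [lia | lra]|].
    destruct (Rle_dec z (x (S m))) as [Hle|Hlt].
    - destruct (IH ltac:(lia) Hle) as [i [Hi Hzi]]; exists i; split; [lia | exact Hzi].
    - exists (S m); split; [lia | lra]. }
  destruct (Hfind (N - 1)%nat ltac:(lia)) as [i [Hi [Hzi1 Hzi2]]];
    [replace (S (N - 1)) with N by lia; exact Hz2|].
  assert (Hi' : (1 <= i < N)%nat) by lia.
  pose proof (affine_slope_pos i Hi'); pose proof (hu1 i Hi'); pose proof (hu2 i Hi').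
  exists i, ((z - b i) / a i); split; [exact Hi'|]; split.
  - split; [apply Rcomplements.Rle_div_r | apply Rcomplements.Rle_div_l]; nra.
  - field; lra.
Qed.

Lemma minI_affine_gap_spec f g i z : (forall y, I y -> g y <= f y) ->
  (1 <= i < N)%nat -> I z ->
  0 <= minI (x 1%nat) (x N) (fun w => f (a i * w + b i) - g (a i * w + b i)) <=
  f (a i * z + b i) - g (a i * z + b i).
Proof.
  intros Hfg Hi Hz.
  apply (minI_spec _ _ (fun w => f (a i * w + b i) - g (a i * w + b i)) 0 z); [|exact Hz].
  intros w Hw; pose proof (Hfg _ (affine_maps_into i w Hi Hw)); lra.
Qed.

Section SelfReferential.

Variables (f Mf G : R -> R) (alpha : nat -> R -> R) (c : R).
Hypothesis hG_cont : contI (x 1%nat) (x N) G.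
Hypothesis hG_eq : forall i y, (1 <= i < N)%nat -> I y ->
  G (a i * y + b i) = f (a i * y + b i) + alpha i y * (G y - Mf y).
Hypothesis hc : c < 1.
Hypothesis halpha : forall i y, (1 <= i < N)%nat -> I y -> Rabs (alpha i y) <= c.

Lemma fractal_dist_le d :
  contI (x 1%nat) (x N) f -> (forall y, I y -> Rabs (f y - Mf y) <= d) ->
  forall y, I y -> Rabs (G y - f y) <= c * d / (1 - c).
Proof.
  intros hf Hd y Hy.
  destruct (contI_argmax_abs_sub _ _ G f (Rlt_le _ _ partition_ends_lt) hG_cont hf)
    as [z [Hz Hmax]].
  destruct (affine_cover z Hz) as [i [y0 [Hi [Hy0 ->]]]].
  set (E := Rabs (G (a i * y0 + b i) - f (a i * y0 + b i))) in *.
  assert (HE : E <= c * (E + d)).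
  { unfold E at 1; rewrite hG_eq by assumption.
    replace (f (a i * y0 + b i) + alpha i y0 * (G y0 - Mf y0) - f (a i * y0 + b i))
      with (alpha i y0 * ((G y0 - f y0) + (f y0 - Mf y0))) by ring.
    rewrite Rabs_mult.
    pose proof (Rabs_triang (G y0 - f y0) (f y0 - Mf y0)).
    pose proof (Hmax y0 Hy0); pose proof (Hd y0 Hy0).
    apply Rmult_le_compat; [apply Rabs_pos | apply Rabs_pos | apply halpha; assumption | lra]. }
  apply Rle_trans with E; [exact (Hmax y Hy)|].
  apply Rcomplements.Rle_div_r; lra.
Qed.

Lemma fractal_ge g phi Phi (phi_i : nat -> R) :
  (forall y, I y -> phi <= g y) -> (forall y, I y -> Mf y <= Phi) ->
  (forall i y, (1 <= i < N)%nat -> I y -> 0 <= alpha i y) ->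
  (forall i y, (1 <= i < N)%nat -> I y -> g (a i * y + b i) + phi_i i <= f (a i * y + b i)) ->
  (forall i y, (1 <= i < N)%nat -> I y -> alpha i y * (Phi - phi) <= phi_i i) ->
  forall y, I y -> g y <= G y.
Proof.
  intros Hphi HPhi Halpha0 Hfg Hkey.
  assert (Hstep : forall i y, (1 <= i < N)%nat -> I y -> phi <= G y ->
            g (a i * y + b i) <= G (a i * y + b i)).
  { intros i y Hi Hy HGy; rewrite hG_eq by assumption.
    pose proof (Halpha0 i y Hi Hy); pose proof (Hfg i y Hi Hy); pose proof (Hkey i y Hi Hy).
    pose proof (HPhi y Hy).
    assert (alpha i y * (phi - Phi) <= alpha i y * (G y - Mf y)) by (apply Rmult_le_compat_l; lra).
    lra. }
  destruct (contI_argmin _ _ G (Rlt_le _ _ partition_ends_lt) hG_cont) as [z [Hz Hmin]].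
  assert (HGz : phi <= G z).
  { destruct (affine_cover z Hz) as [i [y0 [Hi [Hy0 Ez]]]].
    pose proof (hG_eq i y0 Hi Hy0) as Eq; rewrite <- Ez in Eq.
    pose proof (Halpha0 i y0 Hi Hy0) as Hal0.
    pose proof (halpha i y0 Hi Hy0) as Hal; rewrite Rabs_pos_eq in Hal by exact Hal0.
    pose proof (Hkey i y0 Hi Hy0); pose proof (Hfg i y0 Hi Hy0); rewrite <- Ez in *.
    pose proof (HPhi y0 Hy0); pose proof (Hmin y0 Hy0); pose proof (Hphi z Hz).
    assert (alpha i y0 * (G z - Phi) <= alpha i y0 * (G y0 - Mf y0))
      by (apply Rmult_le_compat_l; lra).
    (* Hence G z >= phi + alpha i y0 * (G z - phi), with alpha i y0 <= c < 1. *)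
    nra. }
  intros y Hy; destruct (affine_cover y Hy) as [i [y0 [Hi [Hy0 ->]]]].
  apply Hstep; [exact Hi | exact Hy0 |].
  apply Rle_trans with (G z); [exact HGz | apply Hmin, Hy0].
Qed.

End SelfReferential.

End Partition.

Theorem theorem4p3
  (N : nat) (hN : (2 <= N)%nat)
  (x : nat -> R) (hx : forall i, (1 <= i < N)%nat -> x i < x (S i))
  (a b : nat -> R)
  (hu1 : forall i, (1 <= i < N)%nat -> a i * x 1%nat + b i = x i)
  (hu2 : forall i, (1 <= i < N)%nat -> a i * x N + b i = x (S i))
  (f g : R -> R) (hf : contI (x 1%nat) (x N) f) (hg : contI (x 1%nat) (x N) g)
  (hfg : forall y, inI (x 1%nat) (x N) y -> g y <= f y)
  (q : nat -> R) (hq : forall n, (1 <= n)%nat -> 0 < q n <= 1)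
  (hqlim : is_lim_seq q 1)
  (alpha : nat -> R -> R)
  (halpha_cont : forall i, (1 <= i < N)%nat -> contI (x 1%nat) (x N) (alpha i))
  (h1 : exists c, c < 1 /\
          forall i y, (1 <= i < N)%nat -> inI (x 1%nat) (x N) y -> Rabs (alpha i y) <= c)
  (h2 : forall n i y, (1 <= n)%nat -> (1 <= i < N)%nat -> inI (x 1%nat) (x N) y ->
          0 <= alpha i y /\
          alpha i y <= Rmin
            (minI (x 1%nat) (x N) (fun z => f (a i * z + b i) - g (a i * z + b i))
             / (maxI (x 1%nat) (x N) (MKZ (x 1%nat) (x N) n (q n) f)
                - minI (x 1%nat) (x N) g))
            1)
  (G : nat -> R -> R)
  (hG : forall n, (1 <= n)%nat ->
          contI (x 1%nat) (x N) (G n) /\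
          forall i y, (1 <= i < N)%nat -> inI (x 1%nat) (x N) y ->
            G n (a i * y + b i) =
            f (a i * y + b i) + alpha i y * (G n y - MKZ (x 1%nat) (x N) n (q n) f y)) :
  (forall n y, (1 <= n)%nat -> inI (x 1%nat) (x N) y -> g y <= G n y) /\
  (forall eps, 0 < eps -> exists n0, forall n y, (n0 <= n)%nat -> (1 <= n)%nat ->
     inI (x 1%nat) (x N) y -> Rabs (G n y - f y) < eps).
Proof.
  pose proof (partition_ends_lt N x hN hx) as Hx.
  destruct h1 as [c [Hc1 Hc]].
  split.
  - intros n y Hn Hy; destruct (hG n Hn) as [HGc HGeq].
    pose proof (fun i z => minI_affine_gap_spec N x a b hN hx hu1 hu2 f g i z hfg) as Hphi_i.
    apply (fractal_ge N x a b hN hx hu1 hu2 f (MKZ (x 1%nat) (x N) n (q n) f) (G n) alpha c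
             HGc HGeq Hc1 Hc g (minI (x 1%nat) (x N) g)
             (maxI (x 1%nat) (x N) (MKZ (x 1%nat) (x N) n (q n) f))
             (fun i => minI (x 1%nat) (x N) (fun w => f (a i * w + b i) - g (a i * w + b i))));
      [| | | | | exact Hy].
    + intros z Hz; apply contI_minI_le; [lra | exact hg | exact Hz].
    + intros z Hz; apply MKZ_le_maxI; [exact Hx | specialize (hq n Hn); lra | exact hf | exact Hz].
    + intros i z Hi Hz; apply (h2 n i z Hn Hi Hz).
    + intros i z Hi Hz; specialize (Hphi_i i z Hi Hz); cbv beta; lra.
    + intros i z Hi Hz; destruct (h2 n i z Hn Hi Hz) as [Hal0 Hal].
      apply Rmult_le_of_le_Rmin_div; [exact Hal0 | apply (Hphi_i i z Hi Hz) | exact Hal].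
  - intros eps He.
    assert (hq' : forall n, (1 <= n)%nat -> 0 <= q n <= 1)
      by (intros n Hn; specialize (hq n Hn); lra).
    destruct (MKZ_unif_conv _ _ f q Hx hf hq' hqlim (eps * (1 - c) / 2) ltac:(nra)) as [n0 Hn0].
    exists n0; intros n y Hn Hn1 Hy; destruct (hG n Hn1) as [HGc HGeq].
    enough (Hdist : Rabs (G n y - f y) <= c * (eps * (1 - c) / 2) / (1 - c)).
    { replace (c * (eps * (1 - c) / 2) / (1 - c)) with (c * eps / 2) in Hdist by (field; lra).
      nra. }
    apply (fractal_dist_le N x a b hN hx hu1 hu2 f (MKZ (x 1%nat) (x N) n (q n) f) (G n) alpha c
             HGc HGeq Hc1 Hc); [exact hf | | exact Hy].
    intros z Hz; rewrite Rabs_minus_sym; apply Hn0; assumption.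
Qed.
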